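(* The sets $\{3,4,7\}$, $\{3,6,7\}$, $\{4,5,8,9\}$, $\{4,7,8,11\}$, and $\{5,8,9,12,13\}$ lie both in $\mathcal L(C_6)$ and in $\mathcal L(C_2^5)$.
   Context: $C_n$ denotes a cyclic group of order $n$ and $C_2^r$ an elementary abelian $2$-group of rank $r$. For a subset $G_0$ of a finite abelian group $G$, a sequence over $G_0$ is an element of the free abelian monoid $\mathcal F(G_0)$ with basis $G_0$ (a finite unordered list of elements of $G_0$, repetitions allowed). $\mathcal B(G_0)$ is the monoid of zero-sum sequences over $G_0$ (including the empty sequence). An atom is a minimal zero-sum sequence, i.e. a nonempty zero-sum sequence that is not a product of two nonempty zero-sum sequences. For $B\in\mathcal B(G_0)$, $\mathsf L(B)=\{k\in\mathbb N_0: B \text{ is a product of } k \text{ atoms}\}$, and $\mathcal L(G_0)=\{\mathsf L(B):B\in\mathcal B(G_0)\}$; $\mathcal L(G)$ is the case $G_0=G$. *)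

From mathcomp Require Import all_boot all_order all_algebra.
Set Implicit Arguments. Unset Strict Implicit. Unset Printing Implicit Defensive.
Import GRing.Theory.
Local Open Scope ring_scope.

(* Sequences over G are represented by lists, identified up to permutation
   (perm_eq), i.e. elements of the free abelian monoid F(G). *)
Definition zero_sum (G : zmodType) (s : seq G) : bool := \sum_(g <- s) g == 0.

Definition atom (G : zmodType) (s : seq G) : Prop :=
  [/\ s != [::], zero_sum s &
     ~ exists s1 s2 : seq G, [/\ s1 != [::], s2 != [::], zero_sum s1,
                                 zero_sum s2 & perm_eq s (s1 ++ s2)]].

Definition in_lengths (G : zmodType) (B : seq G) (k : nat) : Prop :=
  exists As : seq (seq G), [/\ size As = k, (forall A, A \in As -> atom A)
                              & perm_eq B (flatten As)].

Definition in_system_of_lengths (G : zmodType) (L : nat -> Prop) : Prop :=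
  exists B : seq G, zero_sum B /\ forall k, L k <-> in_lengths B k.
Arguments in_system_of_lengths G L : clear implicits.

(* The proof is by certified computation.  A sequence over a finite list V of
   distinct group elements is encoded by its multiplicity vector n; a zero-sum
   test on vectors (reflecting [zero_sum]) yields a decidable atom test
   [atomb] (no zero-sum subvector of intermediate size), and factorizations
   of n are enumerated by [lengths_by]: any factorization contains an atom
   through the first occupied coordinate of n, which is removed before
   recursing.  The soundness and completeness of this enumeration
   ([lengths_byP]) only needs a list of candidate atoms containing every atom
   below n; we use all atoms below n, or, when every element of V has order 2,
   the squarefree ones together with the atoms 2 * e_i ([atom_order2]), which
   keeps the search over C_2^5 small. *)

From mathcomp Require Import all_boot all_order all_algebra.
From mathcomp Require Import zify.
Set Implicit Arguments. Unset Strict Implicit. Unset Printing Implicit Defensive.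
Import GRing.Theory.

Lemma all2_leq_size c n : all2 leq c n -> size c = size n.
Proof. by elim: c n => [|x c IH] [|y n] //= /andP[_ /IH ->]. Qed.

Lemma all2_leqP c n : size c = size n ->
  reflect (forall j, nth 0 c j <= nth 0 n j) (all2 leq c n).
Proof.
elim: c n => [|x c IH] [|y n] //=.
  by move=> _; constructor => j; rewrite !nth_nil.
move=> [E]; apply: (iffP andP) => [[Hxy /(IH _ E) H] [|j]|H]; [by []|exact: H|].
by split; [exact: (H 0) | apply/(IH _ E) => j; exact: (H j.+1)].
Qed.

Lemma all2_leq_trans a b c : all2 leq a b -> all2 leq b c -> all2 leq a c.
Proof.
elim: a b c => [|x a IH] [|y b] [|z c] //= /andP[H1 H2] /andP[H3 H4].
by rewrite (leq_trans H1 H3) (IH _ _ H2 H4).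
Qed.

Lemma sumn_all2_leq a n : all2 leq a n -> sumn a <= sumn n.
Proof. elim: a n => [|x a IH] [|y n] //= /andP[H1 /IH H2]; lia. Qed.

Lemma all2_leq_sumn_eq d c : all2 leq d c -> sumn c <= sumn d -> c = d.
Proof.
elim: d c => [|x d IH] [|y c] //= /andP[H1 H2] H3.
have H4 := sumn_all2_leq H2; have -> : y = x by lia.
by rewrite (IH c H2) //; lia.
Qed.

Fixpoint boxes (n : seq nat) : seq (seq nat) :=
  match n with
  | [::] => [:: [::]]
  | k :: n' => [seq i :: b | i <- iota 0 k.+1, b <- boxes n']
  end.

Lemma mem_boxes c n : (c \in boxes n) = all2 leq c n.
Proof.
elim: n c => [|k n IH] [|x c] //.
all: have -> : boxes (k :: n) = [seq i :: b | i <- iota 0 k.+1, b <- boxes n] by [].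
- by apply/negbTE/allpairsPdep => [[i [b [_ _]]]].
- apply/allpairsPdep/idP => [[i [b [Hi Hb [-> ->]]]]|/andP[Hx Hc]].
    by rewrite /= -IH Hb andbT; rewrite mem_iota in Hi; lia.
  by exists x, c; rewrite mem_iota IH; split => //; lia.
Qed.

Fixpoint vsub (n a : seq nat) : seq nat :=
  match n, a with x :: n', y :: a' => (x - y) :: vsub n' a' | _, _ => n end.

Lemma size_vsub n a : size (vsub n a) = size n.
Proof. by elim: n a => [|x n IH] [|y a] //=; rewrite IH. Qed.

Lemma nth_vsub n a j : size a = size n -> nth 0 (vsub n a) j = nth 0 n j - nth 0 a j.
Proof. by elim: n a j => [|x n IH] [|y a] [|j] //= [/IH]. Qed.

Lemma sumn_vsub a n : all2 leq a n -> sumn (vsub n a) = sumn n - sumn a.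
Proof.
elim: a n => [|x a IH] [|y n] //= /andP[H1 H2].
by rewrite (IH _ H2); have := sumn_all2_leq H2; lia.
Qed.

Lemma vsub_le a n : all2 leq a n -> all2 leq (vsub n a) n.
Proof.
move=> H; have E := all2_leq_size H.
by apply/all2_leqP => [|j]; rewrite ?size_vsub // nth_vsub // leq_subr.
Qed.

Fixpoint expand (T : Type) (U : seq T) (c : seq nat) : seq T :=
  match U, c with u :: U', k :: c' => nseq k u ++ expand U' c' | _, _ => [::] end.

Lemma size_expand (T : Type) (U : seq T) c :
  size c = size U -> size (expand U c) = sumn c.
Proof.
by elim: U c => [|u U IH] [|k c] //= [E]; rewrite size_cat size_nseq IH.
Qed.

Lemma map_expand (T T' : Type) (f : T -> T') U c :
  map f (expand U c) = expand (map f U) c.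
Proof. by elim: U c => [|u U IH] [|k c] //=; rewrite map_cat map_nseq IH. Qed.

Lemma mem_expand (T : eqType) (U : seq T) c y : y \in expand U c -> y \in U.
Proof.
elim: U c => [|u U IH] [|k c] //=.
by rewrite mem_cat mem_nseq in_cons => /orP[/andP[_ ->]|/IH ->]; rewrite ?orbT.
Qed.

Lemma expand_vsub (T : eqType) (U : seq T) n a : all2 leq a n -> size n = size U ->
  perm_eq (expand U n) (expand U a ++ expand U (vsub n a)).
Proof.
elim: U n a => [|u U IH] [|x n] [|y a] //= /andP[Hyx Ha] [Hn].
rewrite -{1}(subnKC Hyx) nseqD -!catA perm_cat2l.
by rewrite perm_sym perm_catCA perm_cat2l perm_sym IH.
Qed.

Lemma zero_sum_perm (G : zmodType) (s t : seq G) :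
  perm_eq s t -> zero_sum s = zero_sum t.
Proof. by move=> H; rewrite /zero_sum (perm_big _ H). Qed.

Lemma atom_perm (G : zmodType) (s t : seq G) : perm_eq s t -> atom s -> atom t.
Proof.
move=> H [H1 H2 H3]; split.
- by rewrite -size_eq0 -(perm_size H) size_eq0.
- by rewrite -(zero_sum_perm H).
- move=> [s1 [s2 [A B C D E]]]; apply: H3; exists s1, s2; split => //.
  exact: perm_trans H E.
Qed.

Lemma in_lengths_nil (G : zmodType) k : in_lengths ([::] : seq G) k <-> k = 0.
Proof.
split => [[[|A As] [<- Hat /perm_size /= Hsz]] //|->]; last by exists [::].
have [] := Hat A (mem_head _ _).
by rewrite -size_eq0; move: Hsz; rewrite size_cat; case: (size A).
Qed.

Section Multiplicities.
Variables (G : zmodType) (V : seq G).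
Hypothesis V_uniq : uniq V.

Definition mult (t : seq G) : seq nat := [seq count_mem v t | v <- V].

Lemma count_expand c y : size c = size V ->
  count_mem y (expand V c) = if y \in V then nth 0 c (index y V) else 0.
Proof.
elim: V V_uniq c => [|v U IH] //= /andP[vU HU] [|k c] //= [E].
rewrite count_cat count_nseq IH // in_cons /=.
by have [->|yv] := eqVneq y v; rewrite ?(negbTE vU) ?mul1n ?addn0 ?mul0n.
Qed.

Lemma nth_mult t j : j < size V -> nth 0 (mult t) j = count_mem (nth 0%R V j) t.
Proof. by move=> Hj; rewrite (nth_map 0%R). Qed.

Lemma perm_mult t : {subset t <= V} -> perm_eq t (expand V (mult t)).
Proof.
move=> Ht; apply/allP => y _; apply/eqP.
rewrite count_expand ?size_map //; case: ifP => Hy.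
  by rewrite (nth_map y) ?index_mem // nth_index.
by apply/count_memPn; apply: contraFN Hy => /Ht.
Qed.

Lemma split_expand n s r : size n = size V -> perm_eq (expand V n) (s ++ r) ->
  [/\ all2 leq (mult s) n, perm_eq s (expand V (mult s))
    & perm_eq r (expand V (vsub n (mult s)))].
Proof.
move=> Hn Hp.
have sub : {subset s ++ r <= V}.
  by move=> x; rewrite -(perm_mem Hp); apply: mem_expand.
have hs : {subset s <= V} by move=> x Hx; apply: sub; rewrite mem_cat Hx.
have hr : {subset r <= V} by move=> x Hx; apply: sub; rewrite mem_cat Hx orbT.
have multE j : j < size V -> nth 0 n j = nth 0 (mult s) j + nth 0 (mult r) j.
  move=> Hj; rewrite !nth_mult //.
  move/permP: Hp => /(_ (pred1 (nth 0%R V j))).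
  by rewrite count_cat count_expand // mem_nth // index_uniq.
have Hsz : size (mult s) = size n by rewrite size_map.
have Hle : all2 leq (mult s) n.
  apply/all2_leqP => // j; case: (ltnP j (size V)) => Hj.
    by rewrite (multE j Hj) leq_addr.
  by rewrite nth_default // Hsz Hn.
split => //; first exact: perm_mult.
suff -> : vsub n (mult s) = mult r by apply: perm_mult.
apply: (@eq_from_nth _ 0); first by rewrite size_vsub size_map.
move=> j; rewrite size_vsub Hn => Hj.
by rewrite nth_vsub // (multE j Hj) addKn.
Qed.

Variable zs : pred (seq nat).
Hypothesis zsE : forall c, zs c = zero_sum (expand V c).

Definition atomb (c : seq nat) : bool := (0 < sumn c) && zs c &&
  ~~ has (fun d => (0 < sumn d) && (sumn d < sumn c) && zs d) (boxes c).

Lemma atombP c : size c = size V -> reflect (atom (expand V c)) (atomb c).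
Proof.
move=> Hc; apply: (iffP idP).
- move=> /andP[/andP[Hpos Hz] Hh]; split.
  + by rewrite -size_eq0 size_expand // -lt0n.
  + by rewrite -zsE.
  + move=> [s1 [s2 [n1 n2 z1 z2 Hp]]].
    have [Hle Hs1 _] := split_expand Hc Hp.
    move/negP: Hh; apply; apply/hasP; exists (mult s1); first by rewrite mem_boxes.
    have E1 : sumn (mult s1) = size s1.
      by rewrite -(@size_expand _ V) ?size_map // -(perm_size Hs1).
    have E2 : sumn c = size s1 + size s2.
      by rewrite -(@size_expand _ V) // (perm_size Hp) size_cat.
    rewrite E1 E2 zsE -(zero_sum_perm Hs1) z1 andbT.
    move: n1 n2; rewrite -!size_eq0 -!lt0n => -> P2.
    by rewrite -[X in X < _]addn0 ltn_add2l.
- move=> [Hne Hz Hnd].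
  have Hpos : 0 < sumn c by rewrite -(@size_expand _ V) // lt0n size_eq0.
  rewrite /atomb Hpos zsE Hz /=; apply/hasPn => d Hd.
  apply/negP => /andP[/andP[Hd0 Hdc] Hzd].
  rewrite mem_boxes in Hd; have Hsd : size d = size V by rewrite (all2_leq_size Hd).
  have Hp := expand_vsub Hd Hc.
  apply: Hnd; exists (expand V d), (expand V (vsub c d)); split => //.
  + by rewrite -size_eq0 size_expand // -lt0n.
  + by rewrite -size_eq0 size_expand ?size_vsub // sumn_vsub //; lia.
  + by rewrite -zsE.
  + move: Hz; rewrite (zero_sum_perm Hp) /zero_sum big_cat /=.
    by move: Hzd; rewrite zsE /zero_sum => /eqP ->; rewrite add0r.
Qed.

Definition single (i m : nat) : seq nat :=
  [seq (if j == i then m else 0) | j <- iota 0 (size V)].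

Lemma size_single i m : size (single i m) = size V.
Proof. by rewrite size_map size_iota. Qed.

Lemma nth_single i m j : j < size V -> nth 0 (single i m) j = if j == i then m else 0.
Proof. by move=> Hj; rewrite (nth_map 0) ?size_iota // nth_iota. Qed.

Lemma expand_single i m : i < size V ->
  perm_eq (expand V (single i m)) (nseq m (nth 0%R V i)).
Proof.
move=> Hi; apply/allP => y _; apply/eqP; rewrite count_expand ?size_single //.
rewrite count_nseq /=; case: ifP => Hy.
  rewrite nth_single ?index_mem //.
  have -> : (index y V == i) = (nth 0%R V i == y).
    by apply/eqP/eqP => [<-|<-]; [rewrite nth_index | rewrite index_uniq].
  by case: eqP; rewrite ?mul1n ?mul0n.
by case: eqP => // E; rewrite -E mem_nth in Hy.
Qed.

Lemma atom_order2 c i : size c = size V -> atomb c -> 1 < nth 0 c i ->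
  (nth 0%R V i + nth 0%R V i = 0)%R -> c = single i 2.
Proof.
move=> Hc Ha Hci Hord.
have Hi : i < size V.
  by rewrite ltnNge; apply: contraTN Hci => Hi; rewrite nth_default ?Hc.
have Hdc : all2 leq (single i 2) c.
  apply/all2_leqP => [|j]; first by rewrite size_single.
  case: (ltnP j (size V)) => Hj; last by rewrite nth_default // size_single.
  by rewrite nth_single //; case: eqP => [->|_] //; exact: ltnW.
have Hp := expand_single 2 Hi.
have Hzd : zs (single i 2).
  by rewrite zsE (zero_sum_perm Hp) /zero_sum !big_cons big_nil addr0 Hord.
have Hsumd : sumn (single i 2) = 2.
  by rewrite -(@size_expand _ V) ?size_single // (perm_size Hp).
apply: all2_leq_sumn_eq => //; rewrite Hsumd leqNgt.
move: Ha => /andP[_ /hasPn /(_ (single i 2))]; rewrite mem_boxes => /(_ Hdc).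
by rewrite Hsumd Hzd andbT.
Qed.

Definition atoms_below (n0 : seq nat) : seq (seq nat) := filter atomb (boxes n0).

Definition atoms_below2 (n0 : seq nat) : seq (seq nat) :=
  filter atomb (boxes (map (minn 1) n0) ++ [seq single i 2 | i <- iota 0 (size V)]).

Lemma atoms_below_complete n0 a : atomb a -> all2 leq a n0 -> a \in atoms_below n0.
Proof. by move=> Ha Hle; rewrite mem_filter mem_boxes Ha. Qed.

Lemma atoms_below2_complete n0 a : size n0 = size V ->
  (forall x, x \in V -> (x + x = 0)%R) ->
  atomb a -> all2 leq a n0 -> a \in atoms_below2 n0.
Proof.
move=> Hn0 Hord Ha Hle; have Hsa : size a = size V by rewrite (all2_leq_size Hle).
rewrite mem_filter Ha mem_cat /=.
have [/hasP[x Hx H1x]|/hasPn Hsq] := boolP (has (fun x => 1 < x) a).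
  have Hi : index x a < size V by rewrite -Hsa index_mem.
  rewrite (atom_order2 Hsa Ha (i := index x a)) ?nth_index ?Hord ?mem_nth //.
  by apply/orP; right; apply: map_f; rewrite mem_iota.
apply/orP; left; rewrite mem_boxes.
apply/all2_leqP => [|j]; first by rewrite size_map Hsa.
case: (ltnP j (size a)) => Hj; last by rewrite nth_default.
rewrite (nth_map 0) ?Hn0 -?Hsa // leq_min leqNgt Hsq ?mem_nth //=.
by move/(all2_leqP (all2_leq_size Hle)): Hle.
Qed.

Lemma atoms_below_atoms n0 a : a \in atoms_below n0 -> atomb a.
Proof. by rewrite mem_filter => /andP[]. Qed.

Lemma atoms_below2_atoms n0 a : a \in atoms_below2 n0 -> atomb a.
Proof. by rewrite mem_filter => /andP[]. Qed.

Lemma in_lengths_first_atom n k i : size n = size V -> 0 < nth 0 n i ->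
  in_lengths (expand V n) k ->
  exists2 a, [/\ atomb a, all2 leq a n & 0 < nth 0 a i] &
    exists2 k', k = k'.+1 & in_lengths (expand V (vsub n a)) k'.
Proof.
move=> Hn Hni [As [Hk Hat Hp]].
have Hi : i < size V.
  by rewrite -Hn ltnNge; apply: contraTN Hni => Hi; rewrite nth_default.
have : nth 0%R V i \in expand V n.
  by rewrite -has_pred1 has_count count_expand // mem_nth // index_uniq // -Hn.
rewrite (perm_mem Hp) => /flattenP [A HA yA].
have Hp2 : perm_eq (expand V n) (A ++ flatten (rem A As)).
  exact: perm_trans Hp (perm_flatten (perm_to_rem HA)).
have [Hle HsA Hr] := split_expand Hn Hp2.
exists (mult A).
  split => //; last by rewrite nth_mult // -has_count has_pred1.
  by apply/atombP; [rewrite size_map | exact: atom_perm HsA (Hat A HA)].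
exists (size (rem A As)).
  by rewrite -Hk size_rem // prednK // -has_predT; apply/hasP; exists A.
exists (rem A As); split; [by [] | by move=> B /mem_rem /Hat | by rewrite perm_sym].
Qed.

Lemma in_lengths_add_atom n a k : size n = size V -> atomb a -> all2 leq a n ->
  in_lengths (expand V (vsub n a)) k -> in_lengths (expand V n) k.+1.
Proof.
move=> Hn Ha Hle [As [Hk Hat Hp]].
have Hsa : size a = size V by rewrite (all2_leq_size Hle).
exists (expand V a :: As); split; first by rewrite /= Hk.
- by move=> B; rewrite inE => /predU1P[->|]; [apply/atombP | exact: Hat].
- by apply: perm_trans (expand_vsub Hle Hn) _; rewrite perm_cat2l.
Qed.

(* [lengths_by AT fuel n] lists the lengths of all factorizations of the
   sequence with multiplicities n into atoms from AT: every factorization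
   uses an atom through the first occupied coordinate of n; remove it and
   recurse.  The fuel bounds the recursion depth (sumn n decreases). *)
Fixpoint lengths_by (AT : seq (seq nat)) (fuel : nat) (n : seq nat) : seq nat :=
  if fuel is fuel'.+1 then
    if sumn n == 0 then [:: 0] else
    flatten [seq map succn (lengths_by AT fuel' (vsub n a)) |
              a <- AT & all2 leq a n && (0 < nth 0 a (find (fun k => 0 < k) n))]
  else [::].

Lemma sumn_gt0_has n : sumn n != 0 -> has (fun k => 0 < k) n.
Proof. by elim: n => [|[|x] n IH]. Qed.

Definition same_elems (s t : seq nat) : bool := all (mem t) s && all (mem s) t.

Section Lengths.
Variables (n0 : seq nat) (AT : seq (seq nat)).
Hypothesis AT_atoms : forall a, a \in AT -> atomb a.
Hypothesis AT_complete : forall a, atomb a -> all2 leq a n0 -> a \in AT.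

Lemma lengths_byP fuel n k : size n0 = size V -> all2 leq n n0 -> sumn n < fuel ->
  in_lengths (expand V n) k <-> k \in lengths_by AT fuel n.
Proof.
move=> Hn0; elim: fuel n k => [|fuel IH] n k Hnn0 //= Hf.
have Hn : size n = size V by rewrite (all2_leq_size Hnn0).
have [Hs0|Hs0] := eqVneq (sumn n) 0.
  have -> : expand V n = [::] by apply/size0nil; rewrite size_expand.
  by rewrite in_lengths_nil inE; split => /eqP.
have IHsub a : atomb a -> all2 leq a n -> forall k',
    in_lengths (expand V (vsub n a)) k' <-> k' \in lengths_by AT fuel (vsub n a).
  move=> /andP[/andP[Ha0 _] _] Hle k'; apply: IH.
    exact: all2_leq_trans (vsub_le Hle) Hnn0.
  by rewrite sumn_vsub //; have := sumn_all2_leq Hle; lia.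
have Hni : 0 < nth 0 n (find (fun k => 0 < k) n).
  exact/(nth_find 0)/sumn_gt0_has.
split.
- case/(in_lengths_first_atom Hn Hni) => a [Ha Hle Hai] [k' -> Hk'].
  apply/flattenP; exists (map succn (lengths_by AT fuel (vsub n a))).
    apply/mapP; exists a => //; rewrite mem_filter Hle Hai AT_complete //.
    exact: all2_leq_trans Hle Hnn0.
  by apply: map_f; apply/IHsub.
- move=> /flattenP [L /mapP [a Ha ->] /mapP [k' Hk' ->]].
  move: Ha; rewrite mem_filter => /andP[/andP[Hle _] /AT_atoms Ha].
  exact/(in_lengths_add_atom Hn Ha Hle)/(IHsub a Ha Hle).
Qed.

Lemma realize_lengths (S : seq nat) : size n0 = size V -> zs n0 ->
  same_elems (lengths_by AT (sumn n0).+1 n0) S ->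
  in_system_of_lengths G (fun k => k \in S).
Proof.
move=> Hn0 Hz /andP[/allP H1 /allP H2].
exists (expand V n0); split; first by rewrite -zsE.
move=> k; rewrite (@lengths_byP (sumn n0).+1 n0 k) //; last first.
  by apply/all2_leqP.
by split; [apply: H2 | apply: H1].
Qed.

End Lengths.
End Multiplicities.

Definition V6 : seq 'Z_6 := [seq k%:R%R | k <- [:: 1; 2; 4; 5]].

Definition zs6 (c : seq nat) : bool := sumn (expand [:: 1; 2; 4; 5] c) %% 6 == 0.

Lemma zs6E c : zs6 c = zero_sum (expand V6 c).
Proof.
rewrite /zero_sum /V6 -map_expand big_map -natr_sum -sumnE.
by rewrite -val_eqE /= val_Zp_nat.
Qed.

Definition certificate6 (n0 S : seq nat) : bool := [&& size n0 == 4, zs6 n0 &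
  same_elems (lengths_by (atoms_below zs6 n0) (sumn n0).+1 n0) S].

Lemma certificate6_sound n0 S :
  certificate6 n0 S -> in_system_of_lengths 'Z_6 (fun k => k \in S).
Proof.
case/and3P => /eqP Hn0 Hz Hc; have V6_uniq : uniq V6 by [].
exact: (realize_lengths V6_uniq zs6E (@atoms_below_atoms _ n0)
  (@atoms_below_complete _ n0) Hn0 Hz Hc).
Qed.

Definition bitrow (b : seq bool) : 'rV['Z_2]_5 := \row_(i < 5) (nth false b i)%:R%R.

Fixpoint xorv (a b : seq bool) : seq bool :=
  match a, b with
  | x :: a', y :: b' => (x (+) y) :: xorv a' b'
  | [::], _ => b
  | _ :: _, [::] => a
  end.

Lemma nth_xorv a b i : nth false (xorv a b) i = nth false a i (+) nth false b i.
Proof. by elim: a b i => [|x a IH] [|y b] [|i] //=; rewrite ?addbF. Qed.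

Lemma bitrow_nil : bitrow [::] = 0%R.
Proof. by apply/rowP => i; rewrite !mxE nth_nil. Qed.

Lemma bitrow_xor a b : bitrow (xorv a b) = (bitrow a + bitrow b)%R.
Proof.
apply/rowP => i; rewrite !mxE nth_xorv.
case: (nth false a i); case: (nth false b i) => /=; rewrite ?add0r ?addr0 //.
exact: val_inj.
Qed.

Lemma bitrow_double b : (bitrow b + bitrow b = 0)%R.
Proof.
rewrite -bitrow_xor -bitrow_nil; apply/rowP => i.
by rewrite !mxE nth_xorv addbb nth_nil.
Qed.

Lemma bitrow_entry b (j : 'I_1) (i : 'I_5) : (bitrow b j i == 0%R) = ~~ nth false b i.
Proof. by rewrite !mxE; case: (nth false b i). Qed.

Lemma bitrow_eq0 b : (bitrow b == 0%R) = all (fun i => ~~ nth false b i) (iota 0 5).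
Proof.
apply/eqP/allP => [H i|H].
  rewrite mem_iota => /andP[_ Hi].
  by rewrite -(bitrow_entry b ord0 (Ordinal Hi)) H mxE.
apply/rowP => i; rewrite [RHS]mxE; apply/eqP; rewrite bitrow_entry.
by apply: H; rewrite mem_iota /=.
Qed.

Lemma bitrow_inj a b : size a = 5 -> size b = 5 -> bitrow a = bitrow b -> a = b.
Proof.
move=> Ha Hb H; apply: (@eq_from_nth _ false) => [|i]; first by rewrite Ha Hb.
rewrite Ha => Hi; apply: negb_inj.
by rewrite -!(bitrow_entry _ ord0 (Ordinal Hi)) H.
Qed.

Definition xorfold (l : seq (seq bool)) : seq bool := foldr xorv [::] l.

Lemma sum_bitrow l : (\sum_(x <- l) bitrow x)%R = bitrow (xorfold l).
Proof.
by elim: l => [|x l IH]; rewrite ?big_nil ?bitrow_nil // big_cons IH bitrow_xor.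
Qed.

Definition U2 : seq (seq bool) :=
  [:: [:: true; false; false; false; false];
      [:: false; true; false; false; false];
      [:: false; false; true; false; false];
      [:: false; false; false; true; false];
      [:: false; false; false; false; true];
      [:: true; true; true; true; true];
      [:: true; true; false; false; false]].

Definition V2 : seq 'rV['Z_2]_5 := map bitrow U2.

Lemma V2_uniq : uniq V2.
Proof.
have U2_size : all (fun x => size x == 5) U2 by [].
rewrite map_inj_in_uniq // => a b Ha Hb.
by apply: bitrow_inj; apply/eqP; exact: (allP U2_size).
Qed.

Definition zs2 (c : seq nat) : bool :=
  all (fun i => ~~ nth false (xorfold (expand U2 c)) i) (iota 0 5).

Lemma zs2E c : zs2 c = zero_sum (expand V2 c).
Proof. by rewrite /zero_sum /V2 -map_expand big_map sum_bitrow bitrow_eq0. Qed.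

Definition certificate2 (n0 S : seq nat) : bool := [&& size n0 == 7, zs2 n0 &
  same_elems (lengths_by (atoms_below2 V2 zs2 n0) (sumn n0).+1 n0) S].

Lemma certificate2_sound n0 S :
  certificate2 n0 S -> in_system_of_lengths 'rV['Z_2]_5 (fun k => k \in S).
Proof.
case/and3P => /eqP Hn0 Hz Hc.
have V2_order2 x : x \in V2 -> (x + x = 0)%R.
  by case/mapP => b _ ->; exact: bitrow_double.
exact: (realize_lengths V2_uniq zs2E (@atoms_below2_atoms _ _ _ n0)
  (fun a => @atoms_below2_complete _ _ V2_uniq _ zs2E n0 a Hn0 V2_order2) Hn0 Hz Hc).
Qed.

(* For each set of the theorem: a zero-sum sequence over C_6 (multiplicities
   of 1, 2, 4, 5) and one over C_2^5 (multiplicities of the elements of V2)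
   having it as set of lengths. *)
Definition witnesses : seq (seq nat * seq nat * seq nat) :=
  [:: ([:: 3; 4; 7], [:: 6; 1; 0; 8], [:: 3; 3; 2; 2; 2; 2; 1]);
      ([:: 3; 6; 7], [:: 6; 0; 1; 10], [:: 2; 2; 3; 3; 3; 3; 1]);
      ([:: 4; 5; 8; 9], [:: 8; 0; 1; 12], [:: 4; 4; 3; 3; 3; 3; 1]);
      ([:: 4; 7; 8; 11], [:: 10; 1; 0; 12], [:: 3; 3; 4; 4; 4; 4; 1]);
      ([:: 5; 8; 9; 12; 13], [:: 12; 0; 1; 16], [:: 4; 4; 5; 5; 5; 5; 1])].

Lemma witnesses_valid :
  all (fun w => certificate6 w.1.2 w.1.1 && certificate2 w.2 w.1.1) witnesses.
Proof. by vm_compute. Qed.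

Theorem lemma3p4 :
  forall S : seq nat,
    S \in [:: [:: 3; 4; 7]; [:: 3; 6; 7]; [:: 4; 5; 8; 9]; [:: 4; 7; 8; 11];
              [:: 5; 8; 9; 12; 13]] ->
    in_system_of_lengths 'Z_6 (fun k => k \in S) /\
    in_system_of_lengths 'rV['Z_2]_5 (fun k => k \in S).
Proof.
move=> S HS.
have /mapP [w Hw ->] : S \in [seq w.1.1 | w <- witnesses] by [].
have /andP [H6 H2] := allP witnesses_valid w Hw.
by split; [exact: certificate6_sound H6 | exact: certificate2_sound H2].
Qed.
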